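(* Let $p\ne q$ be primes, $G=\mathbb{Z}_p^2\times\mathbb{Z}_q^2$, and let $(S,\Lambda)$ be a spectral pair in $G$ with $\gcd(|S|,p^2q^2)=pq$ and $|S|=|\Lambda|>pq$. Then $S_p=qD$, where $D$ is a nonempty subset of $\mathbb{Z}_p^2$ with $D\ne\mathbb{Z}_p^2$ (i.e. $S_p=q\,1_D$).
   Context: Elements of $G$ are written $a+b$ with $a\in\mathbb{Z}_p^2$, $b\in\mathbb{Z}_q^2$. For $w=u+v$ define $\chi_w(a+b)=\exp\big(2\pi i(\tfrac{u\cdot a}{p}+\tfrac{v\cdot b}{q})\big)$ and $\chi(S)=\sum_{s\in S}\chi(s)$. $(S,\Lambda)$ is a spectral pair if $|S|=|\Lambda|$ and $\chi_{\lambda-\lambda'}(S)=0$ for all distinct $\lambda,\lambda'\in\Lambda$. $S_p(a)=\#\{b\in\mathbb{Z}_q^2:a+b\in S\}$ is the projection of $S$ to $\mathbb{Z}_p^2$ as a multiset. *)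

From mathcomp Require Import all_boot all_algebra.
From mathcomp Require Import reals trigo complex.
Import GRing.Theory Num.Theory.

Set Implicit Arguments.
Unset Strict Implicit.
Unset Printing Implicit Defensive.

Local Open Scope ring_scope.
Local Open Scope complex_scope.

(* Z_n^2 (used with n prime, so n >= 2 and 'Z_n is really Z/nZ) *)
Definition Z2 (n : nat) : Type := ('Z_n * 'Z_n)%type.

(* G = Z_p^2 x Z_q^2 ; an element a + b is the pair (a, b) *)
Definition Gpq (p q : nat) : Type := (Z2 p * Z2 q)%type.

Definition gsub (p q : nat) (x y : Gpq p q) : Gpq p q :=
  (((x.1.1 - y.1.1)%R, (x.1.2 - y.1.2)%R), ((x.2.1 - y.2.1)%R, (x.2.2 - y.2.2)%R)).

Definition dotZ (n : nat) (u a : Z2 n) : nat :=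
  nat_of_ord ((u.1 * a.1 + u.2 * a.2)%R : 'Z_n).

Definition expi (R : realType) (t : R) : R[i] := cos t +i* sin t.

Definition chi (R : realType) (p q : nat) (w x : Gpq p q) : R[i] :=
  expi (2 * pi * ((dotZ w.1 x.1)%:R / p%:R + (dotZ w.2 x.2)%:R / q%:R)).

Definition chiS (R : realType) (p q : nat) (w : Gpq p q) (S : {set Gpq p q}) : R[i] :=
  \sum_(s in S) chi R w s.

Definition spectral_pair (R : realType) (p q : nat) (S L : {set Gpq p q}) : Prop :=
  #|S| = #|L| /\
  forall l l', l \in L -> l' \in L -> l != l' -> chiS R (gsub l l') S = 0.

Definition Sproj (p q : nat) (S : {set Gpq p q}) (a : Z2 p) : nat :=
  #|[set b : Z2 q | (a, b) \in S]|.

(* Write chi_w(A) = 0 as a vanishing sum of pq-th roots of unity.  Since the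
   cyclotomic polynomial is irreducible over Q, the Galois conjugates
   sum_{x in A} zeta_p^(k u.a) zeta_q^(k' v.b), 0 < k < p, 0 < k' < q, vanish
   too, and Fourier inversion turns this into a linear identity between the
   numbers of points of A on the lines u.a = t, v.b = s and on their
   intersections.  As q^2 does not divide |S| = |Lambda|, these identities
   force the fibres of Lambda, and by the symmetry of spectral pairs those of S,
   over Z_p^2 to have at most q points.  Hence Lambda projects onto more than p
   points of Z_p^2, its differences cover every direction of Z_p^2, and the
   identities show that q divides the number of points of S over every line of
   Z_p^2.  Summing over the p + 1 lines through a gives q | S_p(a), so
   S_p(a) is 0 or q; its support is neither empty nor everything because p^2
   does not divide |S|. *)

From mathcomp Require Import all_boot all_order all_algebra all_field.
From mathcomp Require Import reals trigo complex.
From mathcomp Require Import ring lra zify.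
Import Order.TTheory GRing.Theory Num.Theory.

Set Implicit Arguments.
Unset Strict Implicit.
Unset Printing Implicit Defensive.

Local Open Scope ring_scope.

Lemma map_Cyclotomic (F : fieldType) n (z : F) :
  n.-primitive_root z -> map_poly intr 'Phi_n = cyclotomic z n.
Proof.
elim/ltn_ind: n z => n IHn z prim_z.
have n_gt0 := prim_order_gt0 prim_z.
have [uDn _ inDn] := divisors_correct n_gt0.
have E := congr1 (map_poly (intr : int -> F)) (prod_Cyclotomic n_gt0).
rewrite rmorph_prod rmorphB rmorph1 /= map_polyXn (prod_cyclotomic prim_z) in E.
rewrite (big_rem n) ?inDn //= [RHS](big_rem n) ?inDn //= divnn n_gt0 expr1 in E.
set Q := \prod_(_ <- _) _ in E; have EQ : Q = \prod_(d <- rem n (divisors n))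
    cyclotomic (z ^+ (n %/ d)) d.
  apply: eq_big_seq => d; rewrite mem_rem_uniq ?inE //= inDn => /andP[n'd d_n].
  by rewrite (IHn d _ (z ^+ (n %/ d))) ?dvdn_prim_root // ltn_neqAle n'd dvdn_leq.
rewrite -EQ in E; apply: (mulIf _ E); rewrite EQ.
by apply/monic_neq0/monic_prod => d _; apply: cyclotomic_monic.
Qed.

Lemma ratr_Cyclotomic (F : numFieldType) n :
  map_poly (ratr : rat -> F) (map_poly intr 'Phi_n) = map_poly intr 'Phi_n.
Proof. by rewrite -map_poly_comp; apply: eq_map_poly => b /=; rewrite rmorph_int. Qed.

Lemma Cyclotomic_dvdp_root (F : numFieldType) n (z : F) (P : {poly rat}) :
  n.-primitive_root z -> root (map_poly ratr P) z -> map_poly intr 'Phi_n %| P.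
Proof.
move=> prim_z Pz; have n_gt0 := prim_order_gt0 prim_z.
pose Phi : {poly rat} := map_poly intr 'Phi_n.
have [-> | nzP] := eqVneq P 0; first exact: dvdp0.
pose g := gcdp P Phi.
have gz : root (map_poly ratr g) z.
  have [[u1 u2] /= /eqp_dvdl Eu] := Bezoutp P Phi.
  have /dvdpP[h ->] : u1 * P + u2 * Phi %| g by rewrite Eu dvdpp.
  rewrite rmorphM rootM !rmorphD !rmorphM /= /root !hornerE (eqP Pz) ratr_Cyclotomic.
  have /eqP -> : root (map_poly intr 'Phi_n) z by rewrite (map_Cyclotomic prim_z) root_cyclotomic.
  by rewrite !mulr0 addr0 eqxx orbT.
have g_gt1 : (1 < size g)%N.
  rewrite ltnNge; apply: contraNN nzP => /size1_polyC Dg.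
  move: gz; rewrite Dg map_polyC rootC fmorph_eq0 => /eqP g0.
  have : g == 0 by rewrite Dg g0.
  by rewrite gcdp_eq0 => /andP[].
have [w gw] : exists w : algC, root (map_poly ratr g) w.
  by apply/closed_rootP; rewrite size_map_poly neq_ltn g_gt1 orbT.
have Phiw : root (map_poly (ratr : rat -> algC) Phi) w.
  have /dvdpP[h ->] := dvdp_gcdr P Phi.
  by rewrite rmorphM rootM -/g gw orbT.
have [w0 prim_w0] := C_prim_root_exists n_gt0.
have prim_w : n.-primitive_root w.
  by rewrite -(root_cyclotomic prim_w0) -Cintr_Cyclotomic // -ratr_Cyclotomic.
have [p0 [Dp0 _] min_w] := minCpolyP w.
rewrite -/Phi; suff <- : p0 = Phi by rewrite (dvdp_trans _ (dvdp_gcdl P Phi)) // -min_w.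
apply: (map_inj_poly (fmorph_inj (ratr : {rmorphism rat -> algC})) (rmorph0 _)).
by rewrite -Dp0 (minCpoly_cyclotomic prim_w) -(Cintr_Cyclotomic prim_w) ratr_Cyclotomic.
Qed.

Lemma root_prim_expr_coprime (F : numFieldType) n (z : F) (P : {poly rat}) j :
  n.-primitive_root z -> coprime j n ->
  root (map_poly ratr P) z -> root (map_poly ratr P) (z ^+ j).
Proof.
move=> prim_z co_jn /(Cyclotomic_dvdp_root prim_z) /dvdpP[h ->].
rewrite rmorphM rootM /= ratr_Cyclotomic (map_Cyclotomic prim_z) (root_cyclotomic prim_z).
by rewrite (prim_root_exp_coprime _ prim_z) co_jn orbT.
Qed.

Lemma dvdn_addn_subn n d t : (d < n)%N -> (t < n)%N -> (n %| d + (n - t))%N = (d == t).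
Proof.
move=> d_lt t_lt; apply/idP/eqP => [/dvdnP[c] E|->]; last by rewrite subnKC ?dvdnn // ltnW.
by case: c E => [|[|c]]; lia.
Qed.

Lemma sum_prim_expr (F : idomainType) n (eta : F) m : n.-primitive_root eta ->
  \sum_(0 <= k < n) eta ^+ (k * m) = if (n %| m)%N then n%:R else 0.
Proof.
move=> prim; rewrite big_mkord.
under eq_bigr => k _ do rewrite mulnC exprM.
have [n_m | n'm] := ifP.
  have /eqP -> : eta ^+ m == 1 by rewrite -(prim_order_dvd prim).
  by rewrite (eq_bigr (fun _ => 1)) ?sumr_const ?card_ord // => k _; rewrite expr1n.
have eta_m : eta ^+ m != 1 by rewrite -(prim_order_dvd prim) n'm.
have := subrX1 (eta ^+ m) n.
rewrite -exprM mulnC exprM (prim_expr_order prim) expr1n subrr => /esym/eqP.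
by rewrite mulf_eq0 subr_eq0 (negbTE eta_m) => /eqP.
Qed.

Lemma sum_prim_shift (F : idomainType) n (eta : F) d t :
  n.-primitive_root eta -> (d < n)%N -> (t < n)%N ->
  \sum_(0 <= k < n) eta ^+ (k * (d + (n - t))) = (d == t)%:R * n%:R.
Proof.
move=> prim d_lt t_lt; rewrite sum_prim_expr // dvdn_addn_subn //.
by case: (d == t); rewrite ?mul1r ?mul0r.
Qed.

Lemma sumr_indicator (F : pzSemiRingType) (T : finType) (A : {set T}) (P : pred T) :
  \sum_(x in A) (P x)%:R = #|[set x in A | P x]|%:R :> F.
Proof.
rewrite -sum1_card natr_sum big_mkcond [RHS]big_mkcond /=.
by apply: eq_bigr => x _; rewrite inE; case: (x \in A); case: (P x).
Qed.

Lemma sum_prim_marginal (F : idomainType) n (eta : F) (T : finType) (A : {set T})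
    (d : T -> nat) t :
  n.-primitive_root eta -> (forall x, d x < n)%N -> (t < n)%N ->
  \sum_(0 <= k < n) eta ^+ (k * (n - t)) * \sum_(x in A) eta ^+ (k * d x)
    = (n * #|[set x in A | d x == t]|)%:R.
Proof.
move=> prim d_lt t_lt.
under eq_bigr => k _ do rewrite big_distrr /=.
rewrite exchange_big /= natrM mulrC -sumr_indicator big_distrl /=.
apply: eq_bigr => x _; rewrite -(sum_prim_shift prim) //.
by apply: eq_bigr => k _; rewrite -exprD -mulnDr addnC.
Qed.

(* A right inverse of a square matrix is also a left inverse. *)
Lemma sum_orthogonal_dual (F : fieldType) (T U : finType) (S : {set T}) (L : {set U})
    (f g : U -> T -> F) :
  #|L| = #|S| -> #|S|%:R != 0 :> F ->
  {in L &, forall l l', \sum_(s in S) f l s * g l' s = (l == l')%:R * #|S|%:R} ->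
  {in S &, forall s s', \sum_(l in L) g l s * f l s' = (s == s')%:R * #|S|%:R}.
Proof.
move=> card_LS nS orthoL s s' sS s'S.
pose eS (j : 'I_#|S|) : T := enum_val j.
pose eL (i : 'I_#|S|) : U := enum_val (cast_ord (esym card_LS) i).
have eL_inj : injective eL by move=> i i' /enum_val_inj /cast_ord_inj.
have sumL (G : U -> F) : \sum_(l in L) G l = \sum_(i < #|S|) G (eL i).
  rewrite big_enum_val (reindex (cast_ord (esym card_LS))) //.
  by exists (cast_ord card_LS) => i _; [apply: cast_ordKV | apply: cast_ordK].
pose A : 'M[F]_#|S| := \matrix_(i, j) f (eL i) (eS j).
pose B : 'M[F]_#|S| := \matrix_(j, i) (#|S|%:R^-1 * g (eL i) (eS j)).
have AB : A *m B = 1%:M.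
  apply/matrixP => i i'; rewrite !mxE.
  transitivity (#|S|%:R^-1 * \sum_(s in S) f (eL i) s * g (eL i') s).
    by rewrite [in RHS]big_enum_val mulr_sumr; apply: eq_bigr => j _; rewrite !mxE mulrCA.
  by rewrite orthoL ?enum_valP // (inj_eq eL_inj) mulrCA mulVf ?mulr1.
have [j ->] : exists j, s = eS j by exists (enum_rank_in sS s); rewrite /eS enum_rankK_in.
have [j' ->] : exists j, s' = eS j by exists (enum_rank_in sS s'); rewrite /eS enum_rankK_in.
have /matrixP/(_ j j') := mulmx1C AB; rewrite !mxE (inj_eq enum_val_inj) => BA.
rewrite sumL -BA mulr_suml; apply: eq_bigr => i _.
by rewrite !mxE mulrAC [_^-1 * _ * _]mulrAC mulVf ?mul1r.
Qed.

Section LineCounts.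
Variables (F : numFieldType) (n m : nat) (e1 e2 : F).
Hypotheses (e1_prim : n.-primitive_root e1) (e2_prim : m.-primitive_root e2).
Variables (T : finType) (A : {set T}) (d1 d2 : T -> nat).
Hypotheses (d1_lt : forall x, (d1 x < n)%N) (d2_lt : forall x, (d2 x < m)%N).

Let twist k k' := \sum_(x in A) e1 ^+ (k * d1 x) * e2 ^+ (k' * d2 x).

Hypothesis twist_eq0 : forall k k', (0 < k < n)%N -> (0 < k' < m)%N -> twist k k' = 0.

Lemma card_lines_identity t s : (t < n)%N -> (s < m)%N ->
  (n * #|[set x in A | d1 x == t]| + m * #|[set x in A | d2 x == s]|
   = n * m * #|[set x in A | (d1 x == t) && (d2 x == s)]| + #|A|)%N.
Proof.
move=> t_lt s_lt; have n_gt0 := prim_order_gt0 e1_prim.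
have m_gt0 := prim_order_gt0 e2_prim.
pose G k k' := e1 ^+ (k * (n - t)) * e2 ^+ (k' * (m - s)) * twist k k'.
have full : \sum_(0 <= k < n) \sum_(0 <= k' < m) G k k'
    = (n * m * #|[set x in A | (d1 x == t) && (d2 x == s)]|)%:R.
  transitivity (\sum_(x in A) ((d1 x == t)%:R * n%:R : F) * ((d2 x == s)%:R * m%:R)).
    rewrite /G /twist; under eq_bigr => k _ do under eq_bigr => k' _ do rewrite big_distrr /=.
    under eq_bigr => k _ do rewrite exchange_big /=.
    rewrite exchange_big /=; apply: eq_bigr => x _.
    rewrite -(sum_prim_shift e1_prim) // -(sum_prim_shift e2_prim) // big_distrlr /=.
    apply: eq_bigr => k _; apply: eq_bigr => k' _.
    by rewrite !mulnDr !exprD; ring.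
  rewrite mulnC natrM -sumr_indicator big_distrl /=; apply: eq_bigr => x _.
  by rewrite natrM; case: (d1 x == t); case: (d2 x == s); rewrite ?mul1r ?mul0r ?mulr0.
have row : \sum_(0 <= k' < m) G 0%N k' = (m * #|[set x in A | d2 x == s]|)%:R.
  rewrite -(sum_prim_marginal _ e2_prim) //; apply: eq_bigr => k' _.
  by rewrite /G /twist; under eq_bigr do rewrite mul0n expr0 mul1r; rewrite mul0n expr0 mul1r.
have col : \sum_(0 <= k < n) G k 0%N = (n * #|[set x in A | d1 x == t]|)%:R.
  rewrite -(sum_prim_marginal _ e1_prim) //; apply: eq_bigr => k _.
  by rewrite /G /twist; under eq_bigr do rewrite mul0n expr0 mulr1; rewrite mul0n expr0 mulr1.
have corner : G 0%N 0%N = #|A|%:R.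
  by rewrite /G /twist !mul0n !expr0 !mul1r -sum1_card natr_sum.
(* Fourier inversion: of the twisted sums only the row k = 0 and the column
   k' = 0 survive. *)
have inner k : (0 < k < n)%N -> \sum_(0 <= k' < m) G k k' = G k 0%N.
  move=> k_range; rewrite big_ltn // big_nat big1 ?addr0 // => k' k'_range.
  by rewrite /G twist_eq0 ?mulr0.
apply/eqP; rewrite -(eqr_nat F) !natrD -full -row -col -corner.
rewrite [X in _ == X + _]big_ltn // big_nat (eq_bigr _ inner) [X in X + _ == _]big_ltn // big_nat.
by apply/eqP; ring.
Qed.

End LineCounts.

Local Open Scope complex_scope.

Section Expi.
Variable R : realType.
Implicit Types a b : R.

Lemma expiD a b : expi (a + b) = expi a * expi b.
Proof.
rewrite /expi cosD sinD; apply/eqP; rewrite eq_complex /=.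
by apply/andP; split; apply/eqP; ring.
Qed.

Lemma expi0 : expi (0 : R) = 1.
Proof. by rewrite /expi cos0 sin0. Qed.

Lemma expiMn n a : expi (n%:R * a) = expi a ^+ n.
Proof.
elim: n => [|n IHn]; first by rewrite mul0r expi0.
by rewrite mulrSr mulrDl mul1r expiD IHn exprSr.
Qed.

Lemma expi2pi : expi (2 * pi : R) = 1.
Proof. by rewrite /expi mulr_natl cos2pi sin2pi. Qed.

Lemma expi_neq1 a : 0 < a < 2 * pi -> expi a != 1.
Proof.
case/andP=> a_gt0 a_lt2pi; apply/negP; rewrite /expi => /eqP[cos1 sin0].
have [a_pi|pi_a|a_pi] := ltgtP a pi.
- have : 0 < a < pi by rewrite a_gt0.
  by move/sin_gt0_pi; rewrite sin0 ltxx.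
- have : 0 < a - pi < pi by rewrite subr_gt0 pi_a ltrBlDr -mulr2n -mulr_natl.
  by move/sin_gt0_pi; rewrite -[sin _]opprK -sinDpi subrK sin0 oppr0 ltxx.
- by move: cos1; rewrite a_pi cospi; lra.
Qed.

Definition zeta n : R[i] := expi (2 * pi / n%:R).

Lemma zeta_prim n : (0 < n)%N -> n.-primitive_root (zeta n).
Proof.
move=> n_gt0; have n_neq0 : n%:R != 0 :> R by rewrite pnatr_eq0 -lt0n.
have zeta_n : zeta n ^+ n = 1 by rewrite -expiMn mulrC divfK // expi2pi.
have [m prim_m m_n] := prim_order_exists n_gt0 zeta_n.
suff m_eq_n : m = n by move: prim_m; rewrite m_eq_n.
have m_gt0 := prim_order_gt0 prim_m.
apply/eqP; rewrite eqn_leq dvdn_leq //= leqNgt; apply/negP => m_lt_n.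
have := prim_expr_order prim_m; rewrite -expiMn; apply/eqP/expi_neq1.
rewrite mulr_gt0 ?divr_gt0 ?mulr_gt0 ?pi_gt0 ?ltr0n //= mulrCA gtr_pMr ?mulr_gt0 ?pi_gt0 //.
by rewrite ltr_pdivrMr ?ltr0n // mul1r ltr_nat.
Qed.

Lemma zetaM_expr m n : (0 < m)%N -> zeta (m * n) ^+ m = zeta n.
Proof.
move=> m_gt0; rewrite -expiMn natrM; congr expi.
by rewrite invfM mulrCA mulVKf // pnatr_eq0 -lt0n.
Qed.

End Expi.

Lemma prim_expr_Zp_add (F : idomainType) n (z : F) (a b : 'Z_n) :
  (1 < n)%N -> n.-primitive_root z -> z ^+ (a + b)%R = z ^+ a * z ^+ b.
Proof.
move=> n_gt1 prim; have -> : (a + b)%R = (a + b)%N%:R by rewrite natrD !natr_Zp.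
by rewrite val_Zp_nat // (prim_expr_mod prim) exprD.
Qed.

Lemma ltn_Zp n (x : 'Z_n) : (1 < n)%N -> (x < n)%N.
Proof. by move=> n_gt1; rewrite -[X in (_ < X)%N](Zp_cast n_gt1) ltn_ord. Qed.

Lemma card_Zn n : (1 < n)%N -> #|'Z_n| = n.
Proof. by move=> n_gt1; rewrite card_ord Zp_cast. Qed.

Definition dotz n (u a : Z2 n) : 'Z_n := u.1 * a.1 + u.2 * a.2.

Lemma sumn_option (T : finType) (F : option T -> nat) :
  (\sum_(k : option T) F k = F None + \sum_(k : T) F (Some k))%N.
Proof.
rewrite (bigD1 None) //= (reindex_omap Some id) //=; last by case.
by congr (_ + _)%N; apply: eq_bigl => k; rewrite eqxx.
Qed.

Lemma card_fiber (T1 T2 : finType) (A : {set T1 * T2}) a :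
  #|[set b | (a, b) \in A]| = #|[set x in A | x.1 == a]|.
Proof.
have pair_a_inj : injective (pair a : T2 -> T1 * T2) by move=> b b' [].
rewrite -(card_imset _ pair_a_inj); apply: eq_card => -[a' b]; rewrite !inE.
apply/imsetP/andP => [[b'] | [abA /eqP /= <-]]; last by exists b; rewrite ?inE.
by rewrite inE => ab'A [-> ->].
Qed.

Lemma card_sum_fibers (T1 T2 : finType) (A : {set T1 * T2}) :
  #|A| = (\sum_a #|[set b | (a, b) \in A]|)%N.
Proof.
under eq_bigr => a _ do rewrite card_fiber -sum1_card big_mkcond /=.
rewrite exchange_big /= -sum1_card big_mkcond /=; apply: eq_bigr => x _.
rewrite (bigD1 x.1) //= big1 => [|a /negbTE a_neq]; first by rewrite !inE eqxx andbT addn0.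
by rewrite !inE eq_sym a_neq andbF.
Qed.

Lemma card_le_mul_proj (T1 T2 : finType) (A : {set T1 * T2}) m :
  (forall a, #|[set b | (a, b) \in A]| <= m)%N -> (#|A| <= m * #|[set x.1 | x in A]|)%N.
Proof.
move=> fiber_le; rewrite card_sum_fibers (bigID (mem [set x.1 | x in A])) /=.
rewrite [X in (_ + X)%N]big1 => [|a a_notin]; last first.
  apply/eqP; rewrite cards_eq0; apply/eqP/setP => b; rewrite !inE.
  by apply: contraNF a_notin => abA; apply/imsetP; exists (a, b).
by rewrite addn0 mulnC -sum_nat_const leq_sum.
Qed.

Section Pencils.
Variable n : nat.
Hypothesis n_pr : prime n.

Let n_gt1 := prime_gt1 n_pr.

Lemma Zp_unit_prime (x : 'Z_n) : x != 0 -> x \is a GRing.unit.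
Proof.
move=> x_neq0; rewrite -[x]natr_Zp unitZpE // prime_coprime // gtnNdvd ?ltn_Zp //.
by rewrite lt0n.
Qed.

(* The lines [dotz (dir k) x = t] are all the lines of Z_n^2, in the n + 1
   parallel classes indexed by [k]. *)
Definition dir (k : option 'Z_n) : Z2 n := if k is Some c then (1, c) else (0, 1).

Lemma card_dir_eq (a b : Z2 n) :
  (\sum_(k : option 'Z_n) (dotz (dir k) a == dotz (dir k) b) = if a == b then n.+1 else 1)%N.
Proof.
rewrite sumn_option /dotz /= !mul0r !mul1r !add0r.
case: a b => [a1 a2] [b1 b2] /=; rewrite xpair_eqE.
have [<- | a2_neq] := eqVneq a2 b2.
  under eq_bigr do rewrite (inj_eq (addIr _)).
  by rewrite sum_nat_const card_Zn // andbT; case: (a1 == b1); rewrite ?muln1 ?muln0.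
have a2b2_unit : a2 - b2 \is a GRing.unit by apply: Zp_unit_prime; rewrite subr_eq0.
have eq_c c : (a1 + c * a2 == b1 + c * b2) = (c == (b1 - a1) / (a2 - b2)).
  apply/eqP/eqP => [E | ->]; first apply: (mulIr a2b2_unit).
    rewrite divrK //; transitivity (a1 + c * a2 - (b1 + c * b2) + (b1 - a1)); first ring.
    by rewrite E subrr add0r.
  apply/eqP; rewrite -subr_eq0; apply/eqP.
  transitivity (a1 - b1 + (b1 - a1) / (a2 - b2) * (a2 - b2)); first ring.
  by rewrite divrK //; ring.
under eq_bigr do rewrite eq_c.
by rewrite andbF (bigD1 ((b1 - a1) / (a2 - b2))) //= eqxx big1 // => c /negbTE ->.
Qed.

Lemma sum_card_lines_through (T : finType) (A : {set T}) (pi : T -> Z2 n) (b : Z2 n) :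
  (\sum_(k : option 'Z_n) #|[set x in A | dotz (dir k) (pi x) == dotz (dir k) b]|
   = #|A| + n * #|[set x in A | pi x == b]|)%N.
Proof.
have card_sum (P : pred T) : #|[set x in A | P x]| = (\sum_(x in A) P x)%N.
  rewrite -sum1_card big_mkcond [RHS]big_mkcond; apply: eq_bigr => x _.
  by rewrite inE; case: (x \in A); case: (P x).
under eq_bigr do rewrite card_sum.
rewrite exchange_big card_sum big_distrr -sum1_card -big_split /=.
by apply: eq_bigr => x _; rewrite card_dir_eq; case: (pi x == b); rewrite ?muln1 ?muln0 ?addn0.
Qed.

Lemma exists_pair_dir (X : {set Z2 n}) k : (n < #|X|)%N ->
  exists y y', [/\ y \in X, y' \in X, y != y' &
    exists2 c, c != 0 & (y.1 - y'.1, y.2 - y'.2) = (c * (dir k).1, c * (dir k).2)].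
Proof.
move=> n_lt_X.
pose f (y : Z2 n) : 'Z_n := if k is Some c then y.2 - c * y.1 else y.1.
have /dinjectivePn[y yX [y' /andP[y'_neq y'X] f_eq]] : ~~ dinjectiveb f X.
  apply: contraL n_lt_X => /dinjectiveP/imset_injP/eqP <-.
  by rewrite -leqNgt (leq_trans (max_card _)) // card_Zn.
exists y, y'; split => //; first by rewrite eq_sym.
case: y y' {yX y'X} y'_neq f_eq => [y1 y2] [y1' y2'].
rewrite /f xpair_eqE /=; clear f => y'_neq.
case: k => [c|] f_eq; [exists (y1 - y1') | exists (y2 - y2')].
- apply: contraNneq y'_neq => /eqP; rewrite subr_eq0 => /eqP y1_eq.
  by move: f_eq; rewrite y1_eq => /addIr ->; rewrite !eqxx.
- rewrite mulr1; congr (_, _).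
  transitivity (y2 - c * y1 - (y2' - c * y1') + (y1 - y1') * c); first ring.
  by rewrite f_eq subrr add0r.
- by rewrite f_eq eqxx in y'_neq *; rewrite subr_eq0 eq_sym.
- by rewrite f_eq subrr mulr0 mulr1.
Qed.

Lemma eq_dotz_dir_scale (u x : Z2 n) k (c t : 'Z_n) :
  c != 0 -> u = (c * (dir k).1, c * (dir k).2) ->
  (dotz u x == c * t) = (dotz (dir k) x == t).
Proof.
move=> c_neq0 ->; have -> : dotz (c * (dir k).1, c * (dir k).2) x = c * dotz (dir k) x.
  by rewrite /dotz; cbn [fst snd]; ring.
exact/inj_eq/mulrI/Zp_unit_prime.
Qed.

End Pencils.

Section SpectralPairs.
Variables (R : realType) (p q : nat).
Hypotheses (p_pr : prime p) (q_pr : prime q) (p_neq_q : p != q).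

Let p_gt0 := prime_gt0 p_pr.
Let q_gt0 := prime_gt0 q_pr.

Lemma chiE (w x : Gpq p q) : chi R w x = zeta R p ^+ dotz w.1 x.1 * zeta R q ^+ dotz w.2 x.2.
Proof.
have p_neq0 : p%:R != 0 :> R by rewrite pnatr_eq0 -lt0n.
have q_neq0 : q%:R != 0 :> R by rewrite pnatr_eq0 -lt0n.
by rewrite /chi /zeta -!expiMn -expiD; congr expi; field; rewrite p_neq0 q_neq0.
Qed.

Lemma zeta_pq_expr a b : zeta R (p * q) ^+ (q * a + p * b) = zeta R p ^+ a * zeta R q ^+ b.
Proof. by rewrite exprD !exprM zetaM_expr // mulnC zetaM_expr. Qed.

Lemma chiS_twist_eq0 (A : {set Gpq p q}) (w : Gpq p q) k k' : chiS R w A = 0 ->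
  (0 < k < p)%N -> (0 < k' < q)%N ->
  \sum_(x in A) zeta R p ^+ (k * dotz w.1 x.1) * zeta R q ^+ (k' * dotz w.2 x.2) = 0.
Proof.
(* chi_w(A) = P(zeta_pq) for P in Q[X]; evaluate P at the conjugate zeta_pq^j
   with j = k mod p and j = k' mod q. *)
move=> chiS0 /andP[k_gt0 k_lt] /andP[k'_gt0 k'_lt].
have co_pq : coprime p q by rewrite prime_coprime // dvdn_prime2.
pose j := chinese p q k k'.
have j_p : (j = k %[mod p])%N := chinese_modl co_pq k k'.
have j_q : (j = k' %[mod q])%N := chinese_modr co_pq k k'.
have co_j : coprime j (p * q).
  rewrite coprimeMr -(coprime_modl j p) -(coprime_modl j q) j_p j_q !coprime_modl.
  by rewrite coprime_sym prime_coprime ?gtnNdvd // coprime_sym prime_coprime ?gtnNdvd.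
pose P : {poly rat} := \sum_(x in A) 'X^(q * dotz w.1 x.1 + p * dotz w.2 x.2).
have ratr_P : map_poly (ratr : rat -> R[i]) P =
    \sum_(x in A) 'X^(q * dotz w.1 x.1 + p * dotz w.2 x.2).
  by rewrite rmorph_sum; apply: eq_bigr => x _; rewrite rmorphXn /= map_polyX.
have prim_pq : (p * q).-primitive_root (zeta R (p * q)).
  by apply: zeta_prim; rewrite muln_gt0 p_gt0.
have : root (map_poly ratr P) (zeta R (p * q)).
  rewrite ratr_P /root horner_sum; apply/eqP; rewrite -[RHS]chiS0; apply: eq_bigr => x _.
  by rewrite hornerXn zeta_pq_expr chiE.
move/(root_prim_expr_coprime prim_pq co_j); rewrite ratr_P /root horner_sum.
move/eqP => sum0; rewrite -[RHS]sum0; apply: eq_bigr => x _.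
rewrite hornerXn -exprM mulnDr mulnCA [(j * (p * _))%N]mulnCA zeta_pq_expr.
congr (_ * _); apply/eqP.
  by rewrite (eq_prim_root_expr (zeta_prim R p_gt0)) eq_sym -modnMml j_p modnMml.
by rewrite (eq_prim_root_expr (zeta_prim R q_gt0)) eq_sym -modnMml j_q modnMml.
Qed.

Lemma chiS_eq0_card_lines (A : {set Gpq p q}) (w : Gpq p q) (t : 'Z_p) (s : 'Z_q) :
  chiS R w A = 0 ->
  (p * #|[set x in A | dotz w.1 x.1 == t]| + q * #|[set x in A | dotz w.2 x.2 == s]|
   = p * q * #|[set x in A | (dotz w.1 x.1 == t) && (dotz w.2 x.2 == s)]| + #|A|)%N.
Proof.
move=> chiS0; have [p_gt1 q_gt1] := (prime_gt1 p_pr, prime_gt1 q_pr).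
apply: (card_lines_identity (zeta_prim R p_gt0) (zeta_prim R q_gt0)) => //.
- by move=> x; apply: ltn_Zp.
- by move=> x; apply: ltn_Zp.
- by move=> k k'; apply: chiS_twist_eq0.
- exact: ltn_Zp.
- exact: ltn_Zp.
Qed.

Lemma chi_mulE (w x w' x' : Gpq p q) : chi R w x * chi R w' x' =
  zeta R p ^+ (dotz w.1 x.1 + dotz w'.1 x'.1)%R * zeta R q ^+ (dotz w.2 x.2 + dotz w'.2 x'.2)%R.
Proof.
by rewrite !chiE !prim_expr_Zp_add ?prime_gt1 ?zeta_prim // mulrACA.
Qed.

Lemma chi_mul_subl (l l' s : Gpq p q) :
  chi R l s * chi R (gsub 0 l') s = chi R (gsub l l') s.
Proof.
rewrite chi_mulE chiE; congr (_ ^+ _ * _ ^+ _); congr nat_of_ord;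
  by rewrite /dotz; cbn [fst snd gsub]; rewrite !sub0r; ring.
Qed.

Lemma chi_mul_subr (l s s' : Gpq p q) :
  chi R (gsub 0 l) s' * chi R l s = chi R (gsub s s') l.
Proof.
rewrite chi_mulE chiE; congr (_ ^+ _ * _ ^+ _); congr nat_of_ord;
  by rewrite /dotz; cbn [fst snd gsub]; rewrite !sub0r; ring.
Qed.

Lemma chiS_gsub_self (S : {set Gpq p q}) (l : Gpq p q) : chiS R (gsub l l) S = #|S|%:R.
Proof.
rewrite /chiS -sum1_card natr_sum; apply: eq_bigr => s _.
by rewrite chiE /dotz; cbn [fst snd gsub]; rewrite !subrr !mul0r !addr0 !expr0 mulr1.
Qed.

Lemma spectral_pair_sym (S L : {set Gpq p q}) :
  spectral_pair R S L -> spectral_pair R L S.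
Proof.
case=> card_SL orthoS; split=> // s s' sS s'S s_neq_s'.
have nS : #|S|%:R != 0 :> R[i].
  by rewrite pnatr_eq0 -lt0n card_gt0; apply/set0Pn; exists s.
suff /(_ s' s s'S sS) : {in S &, forall s s',
    \sum_(l in L) chi R (gsub 0 l) s * chi R l s' = (s == s')%:R * #|S|%:R}.
  rewrite eq_sym (negbTE s_neq_s') mul0r => <-.
  by apply: eq_bigr => l _; rewrite chi_mul_subr.
apply: sum_orthogonal_dual (esym card_SL) nS _ => l l' lL l'L.
under eq_bigr do rewrite chi_mul_subl.
have [<-|l_neq] := eqVneq l l'; rewrite -/(chiS R _ S).
  by rewrite chiS_gsub_self mul1r.
by rewrite (orthoS _ _ lL l'L) ?mul0r.
Qed.

Lemma chiS_eq0_card_lines_q (A : {set Gpq p q}) (v : Z2 q) (t : 'Z_q) :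
  chiS R ((0, 0), v) A = 0 -> (q * #|[set x in A | dotz v x.2 == t]| = #|A|)%N.
Proof.
move/(chiS_eq0_card_lines 1 t); cbn [fst snd].
have -> (P : pred (Gpq p q)) : [set x in A | (dotz (0, 0) x.1 == 1) && P x] = set0.
  by apply/setP => x; rewrite !inE /dotz !mul0r addr0 eq_sym oner_eq0 andbF.
by rewrite cards0 !muln0 !add0n.
Qed.

Lemma chiS_eq0_dvd_lines_p (A : {set Gpq p q}) (w : Gpq p q) (t : 'Z_p) :
  chiS R w A = 0 -> (q %| #|A|)%N -> (q %| #|[set x in A | dotz w.1 x.1 == t]|)%N.
Proof.
move=> /(chiS_eq0_card_lines t 0); set X := #|[set x in A | dotz w.1 x.1 == t]|.
set Z := #|[set x in A | _]| => card_eq q_A.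
have : (q %| p * X + q * Z)%N by rewrite card_eq dvdn_add // dvdn_mulr // dvdn_mull.
rewrite dvdn_addl ?(dvdn_mulr _ (dvdnn q)) // Gauss_dvdr //.
by rewrite prime_coprime // dvdn_prime2 // eq_sym.
Qed.

Lemma card_le_of_orthogonal (A : {set Gpq p q}) (Y : {set Z2 q}) :
  ~~ (q ^ 2 %| #|A|)%N ->
  {in Y &, forall y y', y != y' -> chiS R ((0, 0), (y.1 - y'.1, y.2 - y'.2)) A = 0} ->
  (#|Y| <= q)%N.
Proof.
(* If |Y| > q, the differences of Y cover every direction, so every line of
   Z_q^2 carries |A| / q points of A; counting A over the q + 1 lines through
   0 then gives q^2 | |A|. *)
move=> q2_A orthoY; rewrite leqNgt; apply: contra q2_A => q_lt_Y.
have lines k (t : 'Z_q) : (q * #|[set x in A | dotz (dir k) x.2 == t]| = #|A|)%N.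
  have [y [y' [yY y'Y y_neq [c c_neq0 y_diff]]]] := exists_pair_dir q_pr k q_lt_Y.
  rewrite -(chiS_eq0_card_lines_q (c * t) (orthoY _ _ yY y'Y y_neq)).
  congr (_ * _)%N; apply: eq_card => x.
  by rewrite !inE (eq_dotz_dir_scale q_pr _ _ c_neq0 y_diff).
have := congr1 (muln q) (sum_card_lines_through q_pr A snd 0).
rewrite big_distrr /= (eq_bigr _ (fun k _ => lines k _)) sum_nat_const card_option.
rewrite card_Zn ?prime_gt1 // mulnDr mulSn addnC mulnA => /addnI ->.
by apply: dvdn_mulr; rewrite mulnn.
Qed.

Lemma card_fiber_le (S L : {set Gpq p q}) : spectral_pair R S L ->
  ~~ (q ^ 2 %| #|S|)%N -> forall a, (#|[set b | (a, b) \in L]| <= q)%N.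
Proof.
case=> _ orthoS q2_S a; apply: card_le_of_orthogonal q2_S _ => y y'.
rewrite !inE => ayL ay'L y_neq; have := orthoS _ _ ayL ay'L.
by rewrite xpair_eqE eqxx /= => /(_ y_neq); rewrite /gsub; cbn [fst snd]; rewrite !subrr.
Qed.

Lemma card_proj_gt (S L : {set Gpq p q}) : spectral_pair R S L ->
  ~~ (q ^ 2 %| #|S|)%N -> (p * q < #|S|)%N -> (p < #|[set l.1 | l in L]|)%N.
Proof.
move=> spSL q2_S S_gt; have := card_le_mul_proj (card_fiber_le spSL q2_S).
rewrite -spSL.1 => /(leq_trans S_gt).
by rewrite mulnC ltn_pmul2l.
Qed.

Lemma dvdn_card_lines (S L : {set Gpq p q}) : spectral_pair R S L ->
  (q %| #|S|)%N -> (p < #|[set l.1 | l in L]|)%N ->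
  forall k t, (q %| #|[set x in S | dotz (dir k) x.1 == t]|)%N.
Proof.
case=> _ orthoS q_S p_lt k t.
have [_ [_ [/imsetP[l lL ->] /imsetP[l' l'L ->] l1_neq [c c_neq0 l_diff]]]] :=
  exists_pair_dir p_pr k p_lt.
have l_neq : l != l' by apply: contraNneq l1_neq => ->.
have := chiS_eq0_dvd_lines_p (c * t) (orthoS _ _ lL l'L l_neq) q_S.
congr (_ %| _)%N; apply: eq_card => x.
by rewrite !inE (eq_dotz_dir_scale p_pr _ _ c_neq0 l_diff).
Qed.

Lemma dvdn_Sproj (S L : {set Gpq p q}) : spectral_pair R S L ->
  (q %| #|S|)%N -> (p < #|[set l.1 | l in L]|)%N -> forall a, (q %| Sproj S a)%N.
Proof.
move=> spSL q_S p_lt a.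
have : (q %| #|S| + p * #|[set x in S | x.1 == a]|)%N.
  rewrite -(sum_card_lines_through p_pr S fst a); apply: dvdn_sum => k _.
  exact: dvdn_card_lines spSL q_S p_lt k _.
rewrite dvdn_addr // Gauss_dvdr; last by rewrite prime_coprime // dvdn_prime2 // eq_sym.
by rewrite /Sproj card_fiber.
Qed.

End SpectralPairs.

Local Close Scope complex_scope.
Local Close Scope ring_scope.

Lemma gcdn_sq_ndvd p q N : prime p -> prime q -> p != q ->
  gcdn N (p ^ 2 * q ^ 2) = p * q -> ~~ (p ^ 2 %| N).
Proof.
move=> p_pr q_pr p_neq_q gcd_N; apply/negP => p2_N.
have : p ^ 2 %| p * q by rewrite -gcd_N dvdn_gcd p2_N dvdn_mulr.
by rewrite -mulnn dvdn_pmul2l ?prime_gt0 // dvdn_prime2 // (negbTE p_neq_q).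
Qed.

Theorem corollary4p8 (R : realType) (p q : nat) (S L : {set Gpq p q}) :
  prime p -> prime q -> p != q ->
  spectral_pair R S L ->
  gcdn #|S| (p ^ 2 * q ^ 2) = p * q ->
  p * q < #|S| ->
  exists D : {set Z2 p},
    [/\ D != set0, D != setT & forall a : Z2 p, Sproj S a = q * (a \in D)].
Proof.
move=> p_pr q_pr p_neq_q spSL gcd_S S_gt.
have pq_S : p * q %| #|S| by rewrite -gcd_S dvdn_gcdl.
have p2_S := gcdn_sq_ndvd p_pr q_pr p_neq_q gcd_S.
have q2_S : ~~ (q ^ 2 %| #|S|).
  by apply: (gcdn_sq_ndvd q_pr p_pr); rewrite 1?eq_sym // mulnC gcd_S mulnC.
have Sproj_le a : Sproj S a <= q.
  by apply: (card_fiber_le _ _ _ (spectral_pair_sym _ _ spSL)); rewrite // -spSL.1.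
have q_S : q %| #|S| := dvdn_trans (dvdn_mull p (dvdnn q)) pq_S.
have p_lt := card_proj_gt p_pr q_pr p_neq_q spSL q2_S S_gt.
have q_Sproj := dvdn_Sproj p_pr q_pr p_neq_q spSL q_S p_lt.
have Sproj_eq a : Sproj S a = q * (Sproj S a != 0).
  have [-> | Sproj_neq0] := eqVneq (Sproj S a) 0; first by rewrite muln0.
  by rewrite muln1; apply/eqP; rewrite eqn_leq Sproj_le dvdn_leq ?lt0n.
exists [set a | Sproj S a != 0]; split.
- apply: contraTneq S_gt => /setP D0; rewrite -leqNgt card_sum_fibers big1 // => a _.
  by apply/eqP/negbFE; have := D0 a; rewrite !inE.
- apply: contra p2_S => /eqP/setP DT; rewrite card_sum_fibers.
  rewrite (eq_bigr (fun _ => q)) => [|a _]; last first.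
    by have := DT a; rewrite !inE => nz; rewrite [LHS]Sproj_eq nz muln1.
  by rewrite sum_nat_const card_prod !card_Zn ?prime_gt1 // mulnn dvdn_mulr.
- by move=> a; rewrite inE -Sproj_eq.
Qed.
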